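(* Consider the equation $$u_t+u_{xxxxx}+B(t)u_{xxx}+uu_{xxx}+E(t)uu_x+F\,u_xu_{xx}+Q(t)u=0 \qquad (2)$$ where $F$ is a nonzero constant and $B,E,Q$ are smooth functions of $t$. Then a vector field $\mathbf v=\tau\partial_t+\xi\partial_x+\eta\partial_u$ generates a Lie point symmetry group of (2) if and only if $$\tau=k_2t+k_3,\qquad \xi=\tfrac{k_2}{5}x+\delta(t),\qquad \eta=\sigma(t)-\tfrac{2k_2}{5}u$$ for constants $k_2,k_3$ and smooth functions $\delta(t),\sigma(t)$ satisfying $$5(k_2t+k_3)B_t+2k_2B+5\sigma=0,\quad (k_2t+k_3)E_t+\tfrac{2k_2}{5}E=0,\quad \sigma E-\delta_t=0,\quad \sigma Q+\sigma_t=0,\quad (k_2t+k_3)Q_t+k_2Q=0 .$$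
   Context: Lie point symmetries are determined by Lie's classical infinitesimal invariance criterion: the fifth prolongation of $\mathbf v$ applied to the left-hand side of (2) must vanish on solutions of (2). *)

From Stdlib Require Import Reals List.
From Coquelicot Require Import Coquelicot.
Open Scope R_scope.

Definition smooth1 (f : R -> R) : Prop :=
  forall (n : nat) (t : R), ex_derive (Derive_n f n) t.

Definition pt (f : R -> R -> R) : R -> R -> R :=
  fun t x => Derive (fun s => f s x) t.
Definition px (f : R -> R -> R) : R -> R -> R :=
  fun t x => Derive (fun y => f t y) x.

Fixpoint pd2 (ds : list bool) (f : R -> R -> R) : R -> R -> R :=
  match ds with
  | nil => f
  | b :: ds' => (if b then pt else px) (pd2 ds' f)
  end.

Definition smooth2 (f : R -> R -> R) : Prop :=
  forall (ds : list bool) (t x : R),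
    ex_derive (fun s => pd2 ds f s x) t /\
    ex_derive (fun y => pd2 ds f t y) x /\
    continuous (fun p : R * R => pd2 ds f (fst p) (snd p)) (t, x).

Inductive dir3 := Dt | Dx | Du.

Definition pd3_one (d : dir3) (f : R -> R -> R -> R) : R -> R -> R -> R :=
  match d with
  | Dt => fun t x u => Derive (fun s => f s x u) t
  | Dx => fun t x u => Derive (fun y => f t y u) x
  | Du => fun t x u => Derive (fun w => f t x w) u
  end.

Fixpoint pd3 (ds : list dir3) (f : R -> R -> R -> R) : R -> R -> R -> R :=
  match ds with
  | nil => f
  | d :: ds' => pd3_one d (pd3 ds' f)
  end.

Definition smooth3 (f : R -> R -> R -> R) : Prop :=
  forall (ds : list dir3) (t x u : R),
    ex_derive (fun s => pd3 ds f s x u) t /\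
    ex_derive (fun y => pd3 ds f t y u) x /\
    ex_derive (fun w => pd3 ds f t x w) u /\
    continuous (fun p : R * R * R => pd3 ds f (fst (fst p)) (snd (fst p)) (snd p))
      ((t, x), u).

Fixpoint pxn (n : nat) (f : R -> R -> R) : R -> R -> R :=
  match n with
  | O => f
  | S n' => px (pxn n' f)
  end.

Definition Delta (B E Q : R -> R) (F : R) (u : R -> R -> R) (t x : R) : R :=
  pt u t x + pxn 5 u t x + B t * pxn 3 u t x + u t x * pxn 3 u t x
  + E t * u t x * px u t x + F * px u t x * pxn 2 u t x + Q t * u t x.

(** For v = tau d_t + xi d_x + eta d_u, the characteristic along u is
    Qc = eta - tau u_t - xi u_x, and the prolonged coefficients are
    phi^J = D_J Qc + tau u_{J t} + xi u_{J x}  (Olver, Thm 2.36),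
    where on the jet of a function u the total derivatives D_J are the
    ordinary partial derivatives of the composite functions. *)
Section Prolong.
Variables (tau xi eta : R -> R -> R -> R) (u : R -> R -> R).

Definition charQ : R -> R -> R := fun t x =>
  eta t x (u t x) - tau t x (u t x) * pt u t x - xi t x (u t x) * px u t x.

Definition phi_xn (k : nat) : R -> R -> R := fun t x =>
  pxn k charQ t x + tau t x (u t x) * pxn k (pt u) t x
  + xi t x (u t x) * pxn (S k) u t x.

Definition phi_t : R -> R -> R := fun t x =>
  pt charQ t x + tau t x (u t x) * pt (pt u) t x
  + xi t x (u t x) * px (pt u) t x.
End Prolong.

Definition prDelta (B E Q : R -> R) (F : R) (tau xi eta : R -> R -> R -> R)
  (u : R -> R -> R) (t x : R) : R :=
  let U := u t x in
  let u1 := px u t x in let u2 := pxn 2 u t x in let u3 := pxn 3 u t x in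
  (* tau * dDelta/dt  (coefficients depend on t; dDelta/dx = 0) *)
  tau t x U * (Derive B t * u3 + Derive E t * U * u1 + Derive Q t * U)
  (* eta * dDelta/du *)
  + eta t x U * (u3 + E t * u1 + Q t)
  (* phi^J * dDelta/du_J *)
  + phi_t tau xi eta u t x * 1
  + phi_xn tau xi eta u 5 t x * 1
  + phi_xn tau xi eta u 3 t x * (B t + U)
  + phi_xn tau xi eta u 1 t x * (E t * U + F * u2)
  + phi_xn tau xi eta u 2 t x * (F * u1).

(** Lie's infinitesimal invariance criterion: pr^(5) v (Delta) = 0 whenever
    Delta = 0 on the jet space J^5.  Every point of J^5 is the 5-jet of a
    (polynomial, hence smooth) function u(t,x) at a point, so quantifying
    over smooth u and points (t,x) covers exactly J^5. *)
Definition is_lie_point_symmetry (B E Q : R -> R) (F : R)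
  (tau xi eta : R -> R -> R -> R) : Prop :=
  forall u : R -> R -> R, smooth2 u ->
  forall t x : R, Delta B E Q F u t x = 0 ->
    prDelta B E Q F tau xi eta u t x = 0.

(* Lie's criterion is a polynomial identity in the 5-jet (u, u_x, ..., u_xxxxx,
   u_t, u_xt, ..., u_xxxxt) whose coefficients are the partial derivatives of
   tau, xi, eta; it must hold on the hypersurface Delta = 0, which is
   parametrised by solving for u_t.  Every such jet is the jet of a test
   solution u(s, y) = q y + (s - t0) p y with polynomials q, p, so evaluating
   the criterion at well-chosen jets isolates its coefficients.  Five rounds of evaluations, each using
   the previous conclusions to discard monomials, give in turn
   tau_x = tau_u = 0; xi_u = 0 and tau_t = 5 xi_x; eta_xu = eta_uu = 0;
   eta_u = -2 tau_t / 5 together with the condition on B; and finally the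
   conditions on E, Q, delta, sigma and tau_tt = 0.  Conversely, for a
   generator of the stated form, pr^(5) v Delta is -7 k2 / 5 Delta plus a
   combination of the five conditions. *)

From Stdlib Require Import Reals Lra Lia List Factorial.
From Coquelicot Require Import Coquelicot.
Open Scope R_scope.
Import ListNotations.

(** * Calculus of one and several variables *)

(* Coquelicot states derivative values in the carriers of its own algebraic
   structures; this turns such a goal back into an equation on [R], so that
   [ring], [field] and [lra] apply. *)
Ltac R_eq := match goal with |- ?a = ?b => change (@eq R a b) end; cbv beta.

Lemma is_derive_plus_R (f g : R -> R) x df dg :
  is_derive f x df -> is_derive g x dg -> is_derive (fun t => f t + g t) x (df + dg).
Proof. intros; apply (is_derive_plus f g); auto. Qed.

Lemma is_derive_minus_R (f g : R -> R) x df dg :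
  is_derive f x df -> is_derive g x dg -> is_derive (fun t => f t - g t) x (df - dg).
Proof. intros; apply (is_derive_minus f g); auto. Qed.

Lemma is_derive_mult_R (f g : R -> R) x df dg :
  is_derive f x df -> is_derive g x dg ->
  is_derive (fun t => f t * g t) x (df * g x + f x * dg).
Proof. intros Hf Hg; apply (is_derive_mult f g x df dg Hf Hg), Rmult_comm. Qed.

Lemma is_derive_const_R (a x : R) : is_derive (fun _ => a) x 0.
Proof. apply (is_derive_const a x). Qed.

Lemma is_derive_eq_val (f : R -> R) x l1 l2 :
  is_derive f x l1 -> l1 = l2 -> is_derive f x l2.
Proof. now intros H <-. Qed.

Lemma is_derive_0_const (f : R -> R) :
  (forall x, is_derive f x 0) -> forall a b, f a = f b.
Proof.
  intros H a b.
  destruct (MVT_gen f a b (fun _ => 0)) as [c [_ Hc]]; [now intros; apply H| |lra].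
  intros x _. apply (proj2 (continuity_pt_filterlim f x)).
  apply (ex_derive_continuous f x). eexists; apply H.
Qed.

Lemma smooth1_is_derive (q : R -> R) k y :
  smooth1 q -> is_derive (Derive_n q k) y (Derive_n q (S k) y).
Proof. intros Hq; apply Derive_correct, Hq. Qed.

Lemma smooth1_continuous (q : R -> R) k y : smooth1 q -> continuous (Derive_n q k) y.
Proof. intros Hq; apply (ex_derive_continuous (Derive_n q k) y), Hq. Qed.

Lemma continuous_fst_snd {U V : UniformSpace} (p : U * V) :
  continuous (fun z : U * V => (fst z, snd z)) p.
Proof.
  apply (continuous_ext (fun z => z)); [now intros []|apply continuous_id].
Qed.

Lemma is_derive_comp_2d (f fx fy : R -> R -> R) (h : R -> R) (y0 dh : R) :
  (forall a b, is_derive (fun z => f z b) a (fx a b)) ->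
  (forall a b, is_derive (fun w => f a w) b (fy a b)) ->
  continuous (fun z : R * R => fx (fst z) (snd z)) (y0, h y0) ->
  is_derive h y0 dh ->
  is_derive (fun y => f y (h y)) y0 (fx y0 (h y0) + dh * fy y0 (h y0)).
Proof.
  intros Hx Hy Hc Hh.
  assert (Hd : differentiable_pt_lim f y0 (h y0) (fx y0 (h y0)) (fy y0 (h y0))).
  { apply filterdiff_differentiable_pt_lim.
    eapply filterdiff_ext_lin.
    - apply is_derive_filterdiff; [apply filter_forall; intros []; apply Hx|apply Hy|exact Hc].
    - intros []; reflexivity. }
  apply is_derive_Reals.
  replace (fx y0 (h y0) + dh * fy y0 (h y0))
    with (fx y0 (h y0) * 1 + fy y0 (h y0) * dh) by ring.
  apply (derivable_pt_lim_comp_2d f (fun y => y) h y0 _ _ 1 dh Hd);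
    [apply derivable_pt_lim_id|now apply is_derive_Reals].
Qed.

Lemma partials_0_const (f fx fy : R -> R -> R) :
  (forall a b, is_derive (fun z => f z b) a (fx a b)) ->
  (forall a b, is_derive (fun w => f a w) b (fy a b)) ->
  (forall a b, fx a b = 0) -> (forall a b, fy a b = 0) ->
  forall a b, f a b = f 0 0.
Proof.
  intros H1 H2 H3 H4 a b.
  rewrite (is_derive_0_const (fun z => f z b)
             (fun z => is_derive_eq_val _ _ _ _ (H1 z b) (H3 z b)) a 0).
  exact (is_derive_0_const (fun w => f 0 w)
           (fun w => is_derive_eq_val _ _ _ _ (H2 0 w) (H4 0 w)) b 0).
Qed.

Lemma continuous_slice_t (G : R -> R -> R -> R) t0 y w :
  continuous (fun p : R * R * R => G (fst (fst p)) (snd (fst p)) (snd p)) ((t0, y), w) ->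
  continuous (fun z : R * R => G t0 (fst z) (snd z)) (y, w).
Proof.
  intros Hc.
  apply (continuous_comp (fun z : R * R => ((t0, fst z), snd z))
           (fun p : R * R * R => G (fst (fst p)) (snd (fst p)) (snd p))); [|exact Hc].
  apply (continuous_comp_2 (fun z : R * R => (t0, fst z)) snd (fun a b => (a, b)));
    [|apply continuous_snd|apply continuous_fst_snd].
  apply (continuous_comp_2 (fun _ : R * R => t0) fst (fun a b => (a, b)));
    [apply continuous_const|apply continuous_fst|apply continuous_fst_snd].
Qed.

Lemma continuous_slice_x (G : R -> R -> R -> R) s x0 w :
  continuous (fun p : R * R * R => G (fst (fst p)) (snd (fst p)) (snd p)) ((s, x0), w) ->
  continuous (fun z : R * R => G (fst z) x0 (snd z)) (s, w).
Proof.
  intros Hc.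
  apply (continuous_comp (fun z : R * R => ((fst z, x0), snd z))
           (fun p : R * R * R => G (fst (fst p)) (snd (fst p)) (snd p))); [|exact Hc].
  apply (continuous_comp_2 (fun z : R * R => (fst z, x0)) snd (fun a b => (a, b)));
    [|apply continuous_snd|apply continuous_fst_snd].
  apply (continuous_comp_2 fst (fun _ : R * R => x0) (fun a b => (a, b)));
    [apply continuous_fst|apply continuous_const|apply continuous_fst_snd].
Qed.

Lemma pd3_cat (l1 l2 : list dir3) G t x u :
  pd3 (l1 ++ l2) G t x u = pd3 l1 (pd3 l2 G) t x u.
Proof.
  revert t x u. induction l1 as [|[] l1 IH]; intros; simpl; auto;
    apply Derive_ext; intros; apply IH.
Qed.

Lemma pd3_ext (l : list dir3) (G1 G2 : R -> R -> R -> R) :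
  (forall t x u, G1 t x u = G2 t x u) -> forall t x u, pd3 l G1 t x u = pd3 l G2 t x u.
Proof.
  intros H. induction l as [|[] l IH]; intros; simpl; auto;
    apply Derive_ext; intros; apply IH.
Qed.

Lemma pd3_cat_eq0 (l0 : list dir3) G :
  (forall t x u, pd3 l0 G t x u = 0) ->
  forall ds t x u, pd3 (ds ++ l0) G t x u = 0.
Proof.
  intros H ds t x u. rewrite pd3_cat, (pd3_ext ds _ (fun _ _ _ => 0) H).
  revert t x u; induction ds as [|[] ds IH]; intros; simpl; auto;
    (erewrite Derive_ext; [apply Derive_const|intros; apply IH]).
Qed.

Section Smooth3.
Variable G : R -> R -> R -> R.
Hypothesis HG : smooth3 G.

Lemma is_derive_pd3_x ds t a b :
  is_derive (fun z => pd3 ds G t z b) a (pd3 (Dx :: ds) G t a b).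
Proof. apply Derive_correct, (HG ds t a b). Qed.

Lemma is_derive_pd3_u ds t a b :
  is_derive (fun w => pd3 ds G t a w) b (pd3 (Du :: ds) G t a b).
Proof. apply Derive_correct, (HG ds t a b). Qed.

Lemma is_derive_pd3_t ds x s b :
  is_derive (fun z => pd3 ds G z x b) s (pd3 (Dt :: ds) G s x b).
Proof. apply Derive_correct, (HG ds s x b). Qed.

Lemma is_derive_pd3_comp_x ds t0 (h : R -> R) y0 dh :
  is_derive h y0 dh ->
  is_derive (fun y => pd3 ds G t0 y (h y)) y0
    (pd3 (Dx :: ds) G t0 y0 (h y0) + dh * pd3 (Du :: ds) G t0 y0 (h y0)).
Proof.
  apply (is_derive_comp_2d (fun y w => pd3 ds G t0 y w)
           (fun y w => pd3 (Dx :: ds) G t0 y w) (fun y w => pd3 (Du :: ds) G t0 y w));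
    [intros; apply is_derive_pd3_x|intros; apply is_derive_pd3_u|].
  apply (continuous_slice_t (pd3 (Dx :: ds) G)), HG.
Qed.

Lemma is_derive_pd3_comp_t ds x0 (h : R -> R) s0 dh :
  is_derive h s0 dh ->
  is_derive (fun s => pd3 ds G s x0 (h s)) s0
    (pd3 (Dt :: ds) G s0 x0 (h s0) + dh * pd3 (Du :: ds) G s0 x0 (h s0)).
Proof.
  apply (is_derive_comp_2d (fun s w => pd3 ds G s x0 w)
           (fun s w => pd3 (Dt :: ds) G s x0 w) (fun s w => pd3 (Du :: ds) G s x0 w));
    [intros; apply is_derive_pd3_t|intros; apply is_derive_pd3_u|].
  apply (continuous_slice_x (pd3 (Dt :: ds) G)), HG.
Qed.

Lemma pd3_continuity_2d ds t a b : continuity_2d_pt (fun y w => pd3 ds G t y w) a b.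
Proof.
  apply (proj2 (continuity_2d_pt_filterlim _ _ _)).
  apply (continuous_slice_t (pd3 ds G)), HG.
Qed.

Lemma pd3_Dx_Du ds t x u : pd3 (Dx :: Du :: ds) G t x u = pd3 (Du :: Dx :: ds) G t x u.
Proof.
  apply (Schwarz (fun z w => pd3 ds G t z w) x u).
  - apply locally_2d_forall. intros a b.
    repeat split; [apply (HG ds t a b)|apply (HG ds t a b)
                  |apply (HG (Du :: ds) t a b)|apply (HG (Dx :: ds) t a b)].
  - exact (pd3_continuity_2d (Dx :: Du :: ds) t x u).
  - exact (pd3_continuity_2d (Du :: Dx :: ds) t x u).
Qed.

Lemma smooth1_slice_t x u : smooth1 (fun s => G s x u).
Proof.
  intros n t.
  apply (ex_derive_ext (fun s => pd3 (repeat Dt n) G s x u)); [|apply (HG (repeat Dt n) t x u)].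
  intros s; induction n as [|n IH] in s |- *; [reflexivity|].
  simpl. apply Derive_ext; intros; apply IH.
Qed.

End Smooth3.

Definition dx_du (nx nu : nat) : list dir3 := repeat Dx nx ++ repeat Du nu.

Lemma pd3_Du_dx_du G (HG : smooth3 G) nx nu t x u :
  pd3 (Du :: dx_du nx nu) G t x u = pd3 (dx_du nx (S nu)) G t x u.
Proof.
  revert t x u. induction nx as [|n IH]; intros t x u; [reflexivity|].
  change (pd3 (Du :: Dx :: dx_du n nu) G t x u = pd3 (Dx :: dx_du n (S nu)) G t x u).
  rewrite <- (pd3_Dx_Du G HG). simpl. apply Derive_ext; intros y. apply IH.
Qed.

Lemma dx_du_add_u nx nu mu : dx_du nx (nu + mu) = dx_du nx nu ++ repeat Du mu.
Proof. unfold dx_du. rewrite repeat_app, app_assoc. reflexivity. Qed.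

Lemma dx_du_add_x nx mx mu : dx_du (nx + mx) mu = dx_du nx 0 ++ dx_du mx mu.
Proof. unfold dx_du. rewrite repeat_app, app_nil_r, app_assoc. reflexivity. Qed.

Lemma pd3_dx_du_eq0_u G mu :
  (forall t x u, pd3 (repeat Du mu) G t x u = 0) ->
  forall nx nu t x u, (mu <= nu)%nat -> pd3 (dx_du nx nu) G t x u = 0.
Proof.
  intros H nx nu t x u Hle. replace nu with (nu - mu + mu)%nat by lia.
  rewrite dx_du_add_u. apply pd3_cat_eq0, H.
Qed.

Lemma pd3_dx_du_eq0_x G mx mu :
  (forall t x u, pd3 (dx_du mx mu) G t x u = 0) ->
  forall nx t x u, (mx <= nx)%nat -> pd3 (dx_du nx mu) G t x u = 0.
Proof.
  intros H nx t x u Hle. replace nx with (nx - mx + mx)%nat by lia.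
  rewrite dx_du_add_x. apply pd3_cat_eq0, H.
Qed.

(** * Jet polynomials *)

(* Along the curve [y |-> (t0, y, u (t0, y))] the atom
   [Agen g nx nu] stands for [d_x^nx d_u^nu] of the g-th generator (tau, xi,
   eta), [Aux k] for [u_{x^k}], [Auxt k] for [u_{x^k t}], [Agent g] for [d_t]
   of the g-th generator and [Acoef i] for the i-th coefficient of the equation;
   the last two are never differentiated. *)
Inductive atom :=
  Agen (g nx nu : nat) | Aux (k : nat) | Auxt (k : nat) | Agent (g : nat) | Acoef (i : nat).

Record jet := mkJet {
  jgen : nat -> nat -> nat -> R; jux : nat -> R; juxt : nat -> R;
  jgent : nat -> R; jcoef : nat -> R }.

Definition eval_atom (e : jet) (v : atom) : R :=
  match v with
  | Agen g nx nu => jgen e g nx nu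
  | Aux k => jux e k
  | Auxt k => juxt e k
  | Agent g => jgent e g
  | Acoef i => jcoef e i
  end.

Definition mono := (Z * list atom)%type.
Definition poly := list mono.

Fixpoint eval_mono (e : jet) (l : list atom) : R :=
  match l with nil => 1 | v :: l' => eval_atom e v * eval_mono e l' end.

Fixpoint eval_poly (e : jet) (P : poly) : R :=
  match P with nil => 0 | m :: P' => IZR (fst m) * eval_mono e (snd m) + eval_poly e P' end.

Definition pscale (c : Z) (P : poly) : poly := map (fun m => ((c * fst m)%Z, snd m)) P.

Definition pmul (P Q : poly) : poly :=
  flat_map (fun m1 => map (fun m2 => ((fst m1 * fst m2)%Z, snd m1 ++ snd m2)) Q) P.

(* Total x-derivative of an atom, by the chain rule
   [D_x (d_x^a d_u^b g) = d_x^(a+1) d_u^b g + u_x d_x^a d_u^(b+1) g]. *)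
Definition datom (v : atom) : poly :=
  match v with
  | Agen g nx nu => [(1%Z, [Agen g (S nx) nu]); (1%Z, [Aux 1; Agen g nx (S nu)])]
  | Aux k => [(1%Z, [Aux (S k)])]
  | Auxt k => [(1%Z, [Auxt (S k)])]
  | _ => []
  end.

Fixpoint dmono (l : list atom) : poly :=
  match l with
  | nil => nil
  | v :: l' => pmul (datom v) [(1%Z, l')] ++ pmul [(1%Z, [v])] (dmono l')
  end.

Definition dpoly (P : poly) : poly := flat_map (fun m => pscale (fst m) (dmono (snd m))) P.

Fixpoint dpoly_iter (k : nat) (P : poly) : poly :=
  match k with O => P | S k' => dpoly (dpoly_iter k' P) end.

Definition drop_monos (z : atom -> bool) (P : poly) : poly :=
  filter (fun m => negb (existsb z (snd m))) P.

Lemma eval_mono_cat e l1 l2 : eval_mono e (l1 ++ l2) = eval_mono e l1 * eval_mono e l2.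
Proof. induction l1 as [|v l IH]; simpl; [ring|rewrite IH; ring]. Qed.

Lemma eval_poly_cat e P Q : eval_poly e (P ++ Q) = eval_poly e P + eval_poly e Q.
Proof. induction P as [|m P IH]; simpl; [ring|rewrite IH; ring]. Qed.

Lemma eval_pscale e c P : eval_poly e (pscale c P) = IZR c * eval_poly e P.
Proof. induction P as [|m P IH]; simpl; [ring|rewrite IH, mult_IZR; ring]. Qed.

Lemma eval_pmul e P Q : eval_poly e (pmul P Q) = eval_poly e P * eval_poly e Q.
Proof.
  induction P as [|m P IH]; simpl; [ring|].
  rewrite eval_poly_cat, IH.
  enough (eval_poly e (map (fun m2 => ((fst m * fst m2)%Z, snd m ++ snd m2)) Q)
          = IZR (fst m) * eval_mono e (snd m) * eval_poly e Q) as -> by ring.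
  clear IH. induction Q as [|m2 Q IHQ]; simpl; [ring|].
  rewrite IHQ, mult_IZR, eval_mono_cat. ring.
Qed.

Lemma eval_poly_ext e1 e2 P :
  (forall v, eval_atom e1 v = eval_atom e2 v) -> eval_poly e1 P = eval_poly e2 P.
Proof.
  intros H. induction P as [|[c l] P IH]; simpl; auto. rewrite IH. do 2 f_equal.
  induction l; simpl; auto. rewrite H, IHl; auto.
Qed.

Lemma eval_drop_monos e z P :
  (forall v, z v = true -> eval_atom e v = 0) -> eval_poly e (drop_monos z P) = eval_poly e P.
Proof.
  intros Hz. induction P as [|[c l] P IH]; simpl; auto.
  destruct (existsb z l) eqn:Ez; simpl; rewrite IH; [|ring].
  apply existsb_exists in Ez as [v [Hin Hv]].
  enough (eval_mono e l = 0) as -> by ring.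
  induction l as [|w l IHl]; simpl in *; [contradiction|].
  destruct Hin as [<-|Hin]; [rewrite (Hz _ Hv)|rewrite IHl]; auto; ring.
Qed.

Section TotalDerivative.
Variable jet_at : R -> jet.
Hypothesis is_derive_atom :
  forall v y, is_derive (fun y => eval_atom (jet_at y) v) y (eval_poly (jet_at y) (datom v)).

Lemma is_derive_dmono l y :
  is_derive (fun y => eval_mono (jet_at y) l) y (eval_poly (jet_at y) (dmono l)).
Proof.
  induction l as [|v l IH]; [simpl; apply is_derive_const_R|].
  eapply is_derive_eq_val; [apply (is_derive_mult_R _ _ y _ _ (is_derive_atom v y) IH)|].
  cbn [dmono]. rewrite eval_poly_cat, !eval_pmul. cbn [eval_poly eval_mono fst snd].
  R_eq. ring.
Qed.

Lemma is_derive_dpoly P y :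
  is_derive (fun y => eval_poly (jet_at y) P) y (eval_poly (jet_at y) (dpoly P)).
Proof.
  induction P as [|m P IH]; [simpl; apply is_derive_const_R|].
  eapply is_derive_eq_val.
  - apply (is_derive_plus_R _ _ _ _ _ (is_derive_mult_R (fun _ => IZR (fst m)) _ y _ _
             (is_derive_const_R _ y) (is_derive_dmono (snd m) y)) IH).
  - change (dpoly (m :: P)) with (pscale (fst m) (dmono (snd m)) ++ dpoly P).
    rewrite eval_poly_cat, eval_pscale. simpl. R_eq. ring.
Qed.

Lemma Derive_n_dpoly_iter (f : R -> R) P :
  (forall y, f y = eval_poly (jet_at y) P) ->
  forall k y, Derive_n f k y = eval_poly (jet_at y) (dpoly_iter k P).
Proof.
  intros Hf k. induction k as [|k IH]; intros y; simpl; auto.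
  rewrite (Derive_ext _ _ _ IH). apply is_derive_unique, is_derive_dpoly.
Qed.

End TotalDerivative.

(** * Test solutions *)

Fixpoint taylor (x0 : R) (l : list R) (n : nat) (y : R) : R :=
  match l with
  | nil => 0
  | c :: l' => c * (y - x0) ^ n / INR (fact n) + taylor x0 l' (S n) y
  end.

Lemma is_derive_taylor_S x0 l n y : is_derive (taylor x0 l (S n)) y (taylor x0 l n y).
Proof.
  induction l as [|c l IH] in n |- *; [apply is_derive_const_R|].
  apply (is_derive_plus_R (fun y => c * (y - x0) ^ S n / INR (fact (S n))));
    [|apply IH].
  apply (is_derive_ext (fun y => (c / INR (fact (S n))) * (y - x0) ^ S n));
    [intros; unfold Rdiv; R_eq; ring|].
  assert (INR (fact n) <> 0) by apply INR_fact_neq_0.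
  auto_derive; auto.
  change (match n with 0%nat => 1 | S _ => INR n + 1 end) with (INR (S n)).
  rewrite plus_INR, mult_INR, S_INR. R_eq.
  replace (y + - x0) with (y - x0) by ring.
  replace (INR (fact n) + INR n * INR (fact n)) with ((INR n + 1) * INR (fact n)) by ring.
  pose proof (pos_INR n). field. lra.
Qed.

Lemma is_derive_taylor x0 l y : is_derive (taylor x0 l 0) y (taylor x0 (tl l) 0 y).
Proof.
  destruct l as [|c l]; simpl; [apply is_derive_const_R|].
  eapply is_derive_eq_val;
    [apply is_derive_plus_R; [apply is_derive_const_R|apply is_derive_taylor_S]|].
  R_eq; ring.
Qed.

Lemma Derive_n_taylor x0 l k y : Derive_n (taylor x0 l 0) k y = taylor x0 (skipn k l) 0 y.
Proof.
  induction k as [|k IH] in l, y |- *; [reflexivity|].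
  simpl Derive_n. rewrite (Derive_ext _ _ _ (IH l)).
  rewrite (is_derive_unique _ _ _ (is_derive_taylor x0 (skipn k l) y)).
  f_equal. clear. induction k in l |- *; destruct l; simpl; auto.
Qed.

Lemma taylor_S_at x0 l n : taylor x0 l (S n) x0 = 0.
Proof.
  induction l as [|c l IH] in n |- *; [reflexivity|].
  cbn [taylor]. rewrite IH, Rminus_diag, pow_i by lia. unfold Rdiv; ring.
Qed.

Lemma Derive_n_taylor_at x0 l k : Derive_n (taylor x0 l 0) k x0 = nth k l 0.
Proof.
  rewrite Derive_n_taylor.
  enough (forall l', taylor x0 l' 0 x0 = nth 0 l' 0) as ->.
  - induction k in l |- *; destruct l; simpl; auto.
  - intros [|c l']; [reflexivity|]. cbn [taylor]. rewrite taylor_S_at. simpl. field.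
Qed.

Lemma taylor_at x0 l : taylor x0 l 0 x0 = nth 0 l 0.
Proof. exact (Derive_n_taylor_at x0 l 0). Qed.

Lemma taylor_smooth x0 l : smooth1 (taylor x0 l 0).
Proof.
  intros n t. apply (ex_derive_ext (taylor x0 (skipn n l) 0));
    [intros; symmetry; apply Derive_n_taylor|eexists; apply is_derive_taylor].
Qed.

Lemma pd2_cat l1 l2 f t x : pd2 (l1 ++ l2) f t x = pd2 l1 (pd2 l2 f) t x.
Proof.
  induction l1 as [|[] l IH] in t, x |- *; simpl; auto;
    unfold pt, px; apply Derive_ext; intros; apply IH.
Qed.

Lemma pxn_pd2 k f t x : pxn k f t x = pd2 (repeat false k) f t x.
Proof.
  induction k as [|k IH] in t, x |- *; simpl; auto.
  unfold px; apply Derive_ext; intros; apply IH.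
Qed.

Lemma pxn_Derive_n k f t x : pxn k f t x = Derive_n (fun y => f t y) k x.
Proof.
  induction k as [|k IH] in x |- *; simpl; auto.
  unfold px; apply Derive_ext; intros; apply IH.
Qed.

Fixpoint count_t (ds : list bool) : nat :=
  match ds with nil => O | b :: l => if b then S (count_t l) else count_t l end.
Fixpoint count_x (ds : list bool) : nat :=
  match ds with nil => O | b :: l => if b then count_x l else S (count_x l) end.

Lemma count_repeat_false k : count_t (repeat false k) = O /\ count_x (repeat false k) = k.
Proof. induction k as [|k IH]; simpl; auto. now destruct IH as [-> ->]. Qed.

Lemma count_repeat_false_true k :
  count_t (repeat false k ++ [true]) = 1%nat /\ count_x (repeat false k ++ [true]) = k.
Proof. induction k as [|k IH]; simpl; auto. now destruct IH as [-> ->]. Qed.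

(* Test solutions: [u(s, y) = q y + (s - t0) p y] has an arbitrary x-jet [q]
   and an arbitrary [u_t]-jet [p] along [s = t0]. *)
Section TestFunction.
Variables (q p : R -> R) (t0 : R).
Hypotheses (Hq : smooth1 q) (Hp : smooth1 p).

Definition test_fun (s y : R) : R := q y + (s - t0) * p y.

Definition test_fun_pd2 (ds : list bool) (s y : R) : R :=
  match count_t ds with
  | O => Derive_n q (count_x ds) y + (s - t0) * Derive_n p (count_x ds) y
  | 1%nat => Derive_n p (count_x ds) y
  | _ => 0
  end.

Lemma pd2_test_fun ds s y : pd2 ds test_fun s y = test_fun_pd2 ds s y.
Proof.
  induction ds as [|[] ds IH] in s, y |- *; [reflexivity| |];
    simpl pd2; unfold test_fun_pd2; simpl count_t; simpl count_x.
  - unfold pt. rewrite (Derive_ext _ _ _ (fun s => IH s y)). unfold test_fun_pd2.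
    destruct (count_t ds) as [|[|n]]; [|apply Derive_const..].
    apply is_derive_unique. auto_derive; auto. R_eq; ring.
  - unfold px. rewrite (Derive_ext _ _ _ (fun y => IH s y)). unfold test_fun_pd2.
    destruct (count_t ds) as [|[|n]]; [| |apply Derive_const];
      apply is_derive_unique; [|apply smooth1_is_derive; auto].
    apply is_derive_plus_R; [apply smooth1_is_derive; auto|].
    eapply is_derive_eq_val;
      [apply is_derive_mult_R; [apply is_derive_const_R|apply smooth1_is_derive; auto]|].
    R_eq; ring.
Qed.

Lemma test_fun_smooth : smooth2 test_fun.
Proof.
  intros ds t x. split; [|split].
  - apply (ex_derive_ext (fun s => test_fun_pd2 ds s x)); [intros; symmetry; apply pd2_test_fun|].
    unfold test_fun_pd2. destruct (count_t ds) as [|[|n]];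
      [auto_derive; auto|eexists; apply is_derive_const_R..].
  - apply (ex_derive_ext (fun y => test_fun_pd2 ds t y)); [intros; symmetry; apply pd2_test_fun|].
    unfold test_fun_pd2. destruct (count_t ds) as [|[|n]];
      [|eexists; apply smooth1_is_derive; auto|eexists; apply is_derive_const_R].
    eexists. apply is_derive_plus_R; [apply smooth1_is_derive; auto|].
    apply is_derive_mult_R; [apply is_derive_const_R|apply smooth1_is_derive; auto].
  - apply (continuous_ext (fun z : R * R => test_fun_pd2 ds (fst z) (snd z)));
      [intros []; symmetry; apply pd2_test_fun|].
    assert (Hc : forall f, smooth1 f -> forall k,
               continuous (fun z : R * R => Derive_n f k (snd z)) (t, x)).
    { intros f Hf k. apply (continuous_comp snd (Derive_n f k));
        [apply continuous_snd|apply smooth1_continuous; auto]. }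
    unfold test_fun_pd2. destruct (count_t ds) as [|[|n]]; [|auto|apply continuous_const].
    apply (continuous_plus (fun z : R * R => Derive_n q (count_x ds) (snd z))); [auto|].
    apply (continuous_mult (fun z : R * R => fst z - t0)); [|auto].
    apply (continuous_minus (fun z : R * R => fst z) (fun z : R * R => t0));
      [apply continuous_fst|apply continuous_const].
Qed.

Lemma test_fun_t s y : pt test_fun s y = p y.
Proof. apply (pd2_test_fun [true]). Qed.

Lemma test_fun_x s y : px test_fun s y = Derive q y + (s - t0) * Derive p y.
Proof. apply (pd2_test_fun [false]). Qed.

Lemma test_fun_tt s y : pt (pt test_fun) s y = 0.
Proof. apply (pd2_test_fun [true; true]). Qed.

Lemma test_fun_xt s y : px (pt test_fun) s y = Derive p y.
Proof. apply (pd2_test_fun [false; true]). Qed.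

Lemma test_fun_xn k y : pxn k test_fun t0 y = Derive_n q k y.
Proof.
  rewrite pxn_pd2, pd2_test_fun. unfold test_fun_pd2.
  destruct (count_repeat_false k) as [-> ->]. ring.
Qed.

Lemma test_fun_xnt k y : pxn k (pt test_fun) t0 y = Derive_n p k y.
Proof.
  rewrite pxn_pd2, <- (pd2_cat (repeat false k) [true] test_fun), pd2_test_fun.
  unfold test_fun_pd2. destruct (count_repeat_false_true k) as [-> ->]. reflexivity.
Qed.

End TestFunction.

(** * The determining polynomial *)

Definition gen (tau xi eta : R -> R -> R -> R) (g : nat) :=
  match g with O => tau | 1%nat => xi | _ => eta end.

Definition charQ_poly : poly :=
  [(1%Z, [Agen 2 0 0]); ((-1)%Z, [Agen 0 0 0; Auxt 0]); ((-1)%Z, [Agen 1 0 0; Aux 1])].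

Definition phi_x_poly (k : nat) : poly :=
  dpoly_iter k charQ_poly ++ [(1%Z, [Agen 0 0 0; Auxt k]); (1%Z, [Agen 1 0 0; Aux (S k)])].

(* [phi_t] on a test function, for which [u_tt = 0]. *)
Definition phi_t_poly : poly :=
  [(1%Z, [Agent 2]); (1%Z, [Auxt 0; Agen 2 0 1]); ((-1)%Z, [Agent 0; Auxt 0]);
   ((-1)%Z, [Auxt 0; Agen 0 0 1; Auxt 0]); ((-1)%Z, [Agent 1; Aux 1]);
   ((-1)%Z, [Auxt 0; Agen 1 0 1; Aux 1])].

(* The coefficients [Acoef i] are [B; E; Q; B'; E'; Q'; F] in this order. *)
Definition prDelta_poly : poly :=
  pmul [(1%Z, [Agen 0 0 0])]
    [(1%Z, [Acoef 3; Aux 3]); (1%Z, [Acoef 4; Aux 0; Aux 1]); (1%Z, [Acoef 5; Aux 0])]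
  ++ pmul [(1%Z, [Agen 2 0 0])] [(1%Z, [Aux 3]); (1%Z, [Acoef 1; Aux 1]); (1%Z, [Acoef 2])]
  ++ phi_t_poly
  ++ phi_x_poly 5
  ++ pmul (phi_x_poly 3) [(1%Z, [Acoef 0]); (1%Z, [Aux 0])]
  ++ pmul (phi_x_poly 1) [(1%Z, [Acoef 1; Aux 0]); (1%Z, [Acoef 6; Aux 2])]
  ++ pmul (phi_x_poly 2) [(1%Z, [Acoef 6; Aux 1])].

(* The jet at [(t0, x0)] of the test function with x-jet [ux] and [u_t]-jet [ut]. *)
Definition jet_at (B E Q : R -> R) (F : R) (tau xi eta : R -> R -> R -> R)
  (t0 x0 : R) (ux ut : list R) : jet :=
  mkJet (fun g nx nu => pd3 (dx_du nx nu) (gen tau xi eta g) t0 x0 (nth 0 ux 0))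
        (fun k => nth k ux 0) (fun k => nth k ut 0)
        (fun g => pd3 [Dt] (gen tau xi eta g) t0 x0 (nth 0 ux 0))
        (fun i => nth i [B t0; E t0; Q t0; Derive B t0; Derive E t0; Derive Q t0; F] 0).

Definition jet_solves (B E Q : R -> R) (F : R) (t0 : R) (ux ut : list R) : Prop :=
  nth 0 ut 0 + nth 5 ux 0 + B t0 * nth 3 ux 0 + nth 0 ux 0 * nth 3 ux 0
  + E t0 * nth 0 ux 0 * nth 1 ux 0 + F * nth 1 ux 0 * nth 2 ux 0 + Q t0 * nth 0 ux 0 = 0.

Section DeterminingPolynomial.
Variables (B E Q : R -> R) (F : R) (tau xi eta : R -> R -> R -> R).
Hypotheses (Htau : smooth3 tau) (Hxi : smooth3 xi) (Heta : smooth3 eta).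

Lemma gen_smooth g : smooth3 (gen tau xi eta g).
Proof. destruct g as [|[|g]]; simpl; auto. Qed.

Variables (t0 x0 : R) (ux ut : list R).
Let q := taylor x0 ux 0.
Let p := taylor x0 ut 0.
Let u := test_fun q p t0.

Let jet_along (y : R) : jet :=
  mkJet (fun g nx nu => pd3 (dx_du nx nu) (gen tau xi eta g) t0 y (q y))
        (fun k => Derive_n q k y) (fun k => Derive_n p k y)
        (jgent (jet_at B E Q F tau xi eta t0 x0 ux ut))
        (jcoef (jet_at B E Q F tau xi eta t0 x0 ux ut)).

Lemma is_derive_jet_along v y :
  is_derive (fun y => eval_atom (jet_along y) v) y (eval_poly (jet_along y) (datom v)).
Proof.
  destruct v as [g nx nu|k|k|g|i]; simpl; [| | |apply is_derive_const_R..].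
  - eapply is_derive_eq_val.
    + apply (is_derive_pd3_comp_x _ (gen_smooth g)).
      apply (smooth1_is_derive q 0), taylor_smooth.
    + rewrite (pd3_Du_dx_du _ (gen_smooth g)). unfold dx_du. simpl. R_eq. ring.
  - eapply is_derive_eq_val; [apply smooth1_is_derive, taylor_smooth|]. simpl. R_eq; ring.
  - eapply is_derive_eq_val; [apply smooth1_is_derive, taylor_smooth|]. simpl. R_eq; ring.
Qed.

Lemma jet_along_x0 v :
  eval_atom (jet_along x0) v = eval_atom (jet_at B E Q F tau xi eta t0 x0 ux ut) v.
Proof.
  destruct v; simpl; auto; try apply Derive_n_taylor_at.
  unfold q; rewrite taylor_at; auto.
Qed.

Lemma charQ_test_fun y : charQ tau xi eta u t0 y = eval_poly (jet_along y) charQ_poly.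
Proof.
  unfold charQ, u. rewrite test_fun_t, test_fun_x by apply taylor_smooth. unfold test_fun.
  rewrite Rminus_diag, !Rmult_0_l, !Rplus_0_r. unfold jet_along; simpl.
  change (Derive (fun x => q x) y) with (Derive q y). ring.
Qed.

Lemma pxn_charQ_test_fun k :
  pxn k (charQ tau xi eta u) t0 x0
  = eval_poly (jet_at B E Q F tau xi eta t0 x0 ux ut) (dpoly_iter k charQ_poly).
Proof.
  rewrite pxn_Derive_n, (Derive_n_dpoly_iter jet_along is_derive_jet_along _ _ charQ_test_fun).
  apply eval_poly_ext, jet_along_x0.
Qed.

Lemma phi_t_test_fun :
  phi_t tau xi eta u t0 x0 = eval_poly (jet_at B E Q F tau xi eta t0 x0 ux ut) phi_t_poly.
Proof.
  unfold phi_t, u. rewrite test_fun_tt, test_fun_xt by apply taylor_smooth.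
  unfold pt at 1.
  set (h := fun s => q x0 + (s - t0) * p x0).
  rewrite (Derive_ext _ (fun s => pd3 [] eta s x0 (h s) - pd3 [] tau s x0 (h s) * p x0
                           - pd3 [] xi s x0 (h s) * (Derive q x0 + (s - t0) * Derive p x0)))
    by (intros s; unfold charQ; rewrite test_fun_t, test_fun_x by apply taylor_smooth; reflexivity).
  assert (Hh : is_derive h t0 (p x0)) by (unfold h; auto_derive; auto; R_eq; ring).
  erewrite is_derive_unique.
  2:{ apply is_derive_minus_R; [apply is_derive_minus_R|].
      - apply (is_derive_pd3_comp_t _ Heta _ _ _ _ _ Hh).
      - apply is_derive_mult_R;
          [apply (is_derive_pd3_comp_t _ Htau _ _ _ _ _ Hh)|apply is_derive_const_R].
      - apply is_derive_mult_R; [apply (is_derive_pd3_comp_t _ Hxi _ _ _ _ _ Hh)|].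
        auto_derive; auto. }
  unfold h, test_fun, q, p. rewrite Rminus_diag, !Rmult_0_l, !Rplus_0_r.
  change (Derive (taylor x0 ux 0) x0) with (Derive_n (taylor x0 ux 0) 1 x0).
  change (Derive (taylor x0 ut 0) x0) with (Derive_n (taylor x0 ut 0) 1 x0).
  rewrite !taylor_at, !Derive_n_taylor_at.
  simpl. unfold minus, plus, opp, mult, one, zero; simpl. R_eq. ring.
Qed.

Lemma prDelta_poly_eq0 :
  is_lie_point_symmetry B E Q F tau xi eta -> jet_solves B E Q F t0 ux ut ->
  eval_poly (jet_at B E Q F tau xi eta t0 x0 ux ut) prDelta_poly = 0.
Proof.
  intros Hsym Hsol.
  assert (Hux : forall k, pxn k u t0 x0 = nth k ux 0)
    by (intros k; unfold u; rewrite test_fun_xn by apply taylor_smooth; apply Derive_n_taylor_at).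
  assert (Hut : forall k, pxn k (pt u) t0 x0 = nth k ut 0)
    by (intros k; unfold u; rewrite test_fun_xnt by apply taylor_smooth; apply Derive_n_taylor_at).
  assert (Hu0 : u t0 x0 = nth 0 ux 0) by apply (Hux 0%nat).
  assert (Hu1 : px u t0 x0 = nth 1 ux 0) by apply (Hux 1%nat).
  assert (Hut0 : pt u t0 x0 = nth 0 ut 0) by apply (Hut 0%nat).
  assert (HDelta : Delta B E Q F u t0 x0 = 0)
    by (unfold Delta; rewrite Hut0, Hu0, Hu1, !Hux; exact Hsol).
  pose proof (Hsym u (test_fun_smooth _ _ _ (taylor_smooth _ _) (taylor_smooth _ _))
                t0 x0 HDelta) as H.
  unfold prDelta, phi_xn in H. cbv zeta in H.
  rewrite !pxn_charQ_test_fun, phi_t_test_fun, !Hut, !Hux, Hu1, Hu0 in H.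
  rewrite <- H. unfold prDelta_poly, phi_x_poly.
  rewrite !eval_poly_cat, !eval_pmul, !eval_poly_cat.
  cbn [eval_poly eval_mono eval_atom jet_at jgen jux juxt jgent jcoef fst snd nth pd3 dx_du
       repeat app gen].
  ring.
Qed.

End DeterminingPolynomial.

(** * The determining equations *)

Definition symmetry_generator (tau xi eta : R -> R -> R -> R) (k2 k3 : R)
  (delta sigma : R -> R) : Prop :=
  forall t x u,
    tau t x u = k2 * t + k3 /\
    xi t x u = k2 / 5 * x + delta t /\
    eta t x u = sigma t - 2 * k2 / 5 * u.

Definition symmetry_conditions (B E Q : R -> R) (k2 k3 : R) (delta sigma : R -> R) : Prop :=
  forall t,
    5 * (k2 * t + k3) * Derive B t + 2 * k2 * B t + 5 * sigma t = 0 /\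
    (k2 * t + k3) * Derive E t + 2 * k2 / 5 * E t = 0 /\
    sigma t * E t - Derive delta t = 0 /\
    sigma t * Q t + Derive sigma t = 0 /\
    (k2 * t + k3) * Derive Q t + k2 * Q t = 0.

Create HintDb vanishing.

Ltac nth_vanishes k Hv :=
  do 8 (destruct k as [|k]; [simpl in Hv |- *; first [discriminate | reflexivity]|]);
  destruct k; reflexivity.

Section DeterminingEquations.
Variables (B E Q : R -> R) (F : R) (tau xi eta : R -> R -> R -> R).
Hypotheses (Htau : smooth3 tau) (Hxi : smooth3 xi) (Heta : smooth3 eta).
Hypothesis Hsym : is_lie_point_symmetry B E Q F tau xi eta.

Notation J := (jet_at B E Q F tau xi eta).

#[local] Hint Extern 1 (le _ _) => lia : vanishing.
#[local] Hint Extern 1 (_ \/ _) => lia : vanishing.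
#[local] Hint Extern 1 (_ /\ _) => lia : vanishing.

Lemma prDelta_poly_drop_eq0 (z : atom -> bool) t0 x0 ux ut P :
  drop_monos z prDelta_poly = P ->
  (forall v, z v = true -> eval_atom (J t0 x0 ux ut) v = 0) ->
  jet_solves B E Q F t0 ux ut -> eval_poly (J t0 x0 ux ut) P = 0.
Proof.
  intros <- Hz Hsol. rewrite eval_drop_monos by exact Hz.
  apply prDelta_poly_eq0; assumption.
Qed.

(* The atoms selected by [z] vanish at the jet, by what is already known about
   the generators (the [vanishing] hints) or because the jet entry is [0]. *)
Ltac atoms_vanish z :=
  intros [g nx nu|k|k|g|i] Hv; cbn [z] in Hv; try discriminate;
  cbn [eval_atom jet_at jgen jux juxt];
  first
    [ nth_vanishes k Hv
    | destruct g as [|[|[|g]]]; cbn [gen];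
      repeat (first [rewrite Bool.orb_true_iff in Hv | rewrite Bool.andb_true_iff in Hv
                    | rewrite Nat.leb_le in Hv | rewrite Nat.eqb_eq in Hv]);
      repeat match type of Hv with _ \/ _ => destruct Hv as [Hv|Hv] end;
      first [discriminate | solve [eauto with vanishing]] ].

(* Evaluates the truncated determining polynomial at the four jets
   [(ux a c, ut a c)], [a, c] in {0, 1}; [ut a c] is chosen so that the jet
   solves the equation. *)
Ltac determining_at_corners z t0 x0 ux ut :=
  let P := eval vm_compute in (drop_monos z prDelta_poly) in
  let at_jet a c :=
    let H := fresh "H" in
    let ux' := eval cbv beta in (ux a c) in
    let ut' := eval cbv beta in (ut a c) in
    assert (H : eval_poly (J t0 x0 ux' ut') P = 0);
    [ apply (prDelta_poly_drop_eq0 z t0 x0 ux' ut' P);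
        [vm_compute; reflexivity | atoms_vanish z | unfold jet_solves; simpl; ring]
    | cbn [eval_poly eval_mono eval_atom fst snd jet_at jgen jux juxt jgent jcoef nth
           gen dx_du repeat app] in H;
      change (pd3 []) with (fun f : R -> R -> R -> R => f) in H; cbv beta in H ] in
  at_jet 0 0; at_jet 0 1; at_jet 1 0; at_jet 1 1.

Definition drop1 (v : atom) : bool :=
  match v with Aux k => Nat.leb 2 k | Auxt k => Nat.leb 1 k && negb (Nat.eqb k 4) | _ => false end.

Lemma tau_dx_du t x U : pd3 [Dx] tau t x U = 0 /\ pd3 [Du] tau t x U = 0.
Proof.
  determining_at_corners drop1 t x
    (fun a c : R => [U; a]) (fun a c : R => [-(E t * U * a + Q t * U); 0; 0; 0; c]).
  split; lra.
Qed.

Definition tau0 t := tau t 0 0.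

Lemma tau_eq_tau0 t x u : tau t x u = tau0 t.
Proof.
  apply (partials_0_const (fun y w => pd3 [] tau t y w) (fun y w => pd3 [Dx] tau t y w)
           (fun y w => pd3 [Du] tau t y w));
    [intros; apply (is_derive_pd3_x tau Htau [])|intros; apply (is_derive_pd3_u tau Htau [])
    |intros; apply (proj1 (tau_dx_du _ _ _))|intros; apply (proj2 (tau_dx_du _ _ _))].
Qed.

Lemma tau_dx_du_eq0 nx nu t x u : (1 <= nx + nu)%nat -> pd3 (dx_du nx nu) tau t x u = 0.
Proof.
  intros Hn. destruct nu as [|nu].
  - apply (pd3_dx_du_eq0_x tau 1 0); [intros; apply (proj1 (tau_dx_du _ _ _))|lia].
  - apply (pd3_dx_du_eq0_u tau 1); [intros; apply (proj2 (tau_dx_du _ _ _))|lia].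
Qed.
#[local] Hint Resolve tau_dx_du_eq0 : vanishing.

Lemma tau_dt t x u : pd3 [Dt] tau t x u = Derive tau0 t.
Proof. apply Derive_ext; intros; apply tau_eq_tau0. Qed.

Definition drop2 (v : atom) : bool :=
  match v with
  | Aux k => Nat.leb 2 k && negb (Nat.eqb k 5)
  | Auxt k => Nat.leb 1 k
  | Agen 0 nx nu => Nat.leb 1 (nx + nu)
  | _ => false
  end.

Lemma xi_du_tau_dt t x U :
  pd3 [Du] xi t x U = 0 /\ pd3 [Dt] tau t x U = 5 * pd3 [Dx] xi t x U.
Proof.
  determining_at_corners drop2 t x
    (fun a c : R => [U; a; 0; 0; 0; c]) (fun a c : R => [-(c + E t * U * a + Q t * U)]).
  split; lra.
Qed.

Lemma xi_dx t x u : pd3 [Dx] xi t x u = Derive tau0 t / 5.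
Proof. destruct (xi_du_tau_dt t x u) as [_ H]. rewrite tau_dt in H. lra. Qed.

Lemma xi_affine t x u : xi t x u = xi t 0 0 + x * Derive tau0 t / 5.
Proof.
  enough (K : forall y w, xi t y w - y * Derive tau0 t / 5 = xi t 0 0 - 0 * Derive tau0 t / 5)
    by (specialize (K x u); lra).
  apply (partials_0_const (fun y w => xi t y w - y * Derive tau0 t / 5)
           (fun y w => pd3 [Dx] xi t y w - Derive tau0 t / 5)
           (fun y w => pd3 [Du] xi t y w - 0)).
  - intros. apply is_derive_minus_R; [apply (is_derive_pd3_x xi Hxi [])|].
    auto_derive; auto. R_eq; field.
  - intros. apply is_derive_minus_R; [apply (is_derive_pd3_u xi Hxi [])|apply is_derive_const_R].
  - intros; rewrite xi_dx; ring.
  - intros; rewrite (proj1 (xi_du_tau_dt _ _ _)); ring.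
Qed.

Lemma xi_dx_du_eq0 nx nu t x u :
  (1 <= nu)%nat \/ (2 <= nx)%nat -> pd3 (dx_du nx nu) xi t x u = 0.
Proof.
  intros Hn. destruct nu as [|nu].
  - apply (pd3_dx_du_eq0_x xi 2 0); [|lia]. intros t' x' u'. simpl.
    rewrite (Derive_ext _ (fun _ => Derive tau0 t' / 5)) by (intros; apply xi_dx).
    apply Derive_const.
  - apply (pd3_dx_du_eq0_u xi 1); [intros; apply (proj1 (xi_du_tau_dt _ _ _))|lia].
Qed.
#[local] Hint Resolve xi_dx_du_eq0 : vanishing.

Definition drop3 (v : atom) : bool :=
  match v with
  | Aux k => Nat.eqb k 2 || Nat.eqb k 3 || Nat.leb 5 k
  | Auxt k => Nat.leb 1 k
  | Agen 0 nx nu => Nat.leb 1 (nx + nu)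
  | Agen 1 nx nu => Nat.leb 1 nu || Nat.leb 2 nx
  | _ => false
  end.

Lemma eta_dxu_duu t x U : pd3 [Dx; Du] eta t x U = 0 /\ pd3 [Du; Du] eta t x U = 0.
Proof.
  determining_at_corners drop3 t x
    (fun a c : R => [U; a; 0; 0; c]) (fun a c : R => [-(E t * U * a + Q t * U)]).
  split; lra.
Qed.

Definition eta_du0 t := pd3 [Du] eta t 0 0.

Lemma eta_du t x u : pd3 [Du] eta t x u = eta_du0 t.
Proof.
  apply (partials_0_const (fun y w => pd3 [Du] eta t y w) (fun y w => pd3 [Dx; Du] eta t y w)
           (fun y w => pd3 [Du; Du] eta t y w));
    [intros; apply (is_derive_pd3_x eta Heta [Du])|intros; apply (is_derive_pd3_u eta Heta [Du])
    |intros; apply (proj1 (eta_dxu_duu _ _ _))|intros; apply (proj2 (eta_dxu_duu _ _ _))].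
Qed.

Lemma eta_affine_u t x u : eta t x u = eta t x 0 + u * eta_du0 t.
Proof.
  enough (K : forall w, eta t x w - w * eta_du0 t = eta t x 0 - 0 * eta_du0 t)
    by (specialize (K u); lra).
  intros w. apply (is_derive_0_const (fun w => eta t x w - w * eta_du0 t)). intros z.
  eapply is_derive_eq_val;
    [apply is_derive_minus_R; [apply (is_derive_pd3_u eta Heta [] t x z)|]|].
  - apply (is_derive_ext (fun w => eta_du0 t * w)); [intros; R_eq; ring|].
    apply is_derive_scal, is_derive_id.
  - rewrite eta_du. unfold one; simpl. R_eq. ring.
Qed.

Lemma eta_dx_du_eq0 nx nu t x u :
  (2 <= nu)%nat \/ (nu = 1 /\ 1 <= nx)%nat -> pd3 (dx_du nx nu) eta t x u = 0.
Proof.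
  intros [Hn|[-> Hn]].
  - apply (pd3_dx_du_eq0_u eta 2); [intros; apply (proj2 (eta_dxu_duu _ _ _))|lia].
  - apply (pd3_dx_du_eq0_x eta 1 1); [intros; apply (proj1 (eta_dxu_duu _ _ _))|lia].
Qed.
#[local] Hint Resolve eta_dx_du_eq0 : vanishing.

Definition drop4 (v : atom) : bool :=
  match v with
  | Aux k => Nat.eqb k 1 || Nat.eqb k 2 || Nat.leb 4 k
  | Auxt k => Nat.leb 1 k
  | Agen 0 nx nu => Nat.leb 1 (nx + nu)
  | Agen 1 nx nu => Nat.leb 1 nu || Nat.leb 2 nx
  | Agen 2 nx nu => Nat.leb 2 nu || (Nat.eqb nu 1 && Nat.leb 1 nx)
  | _ => false
  end.

Lemma eta_du0_eta_x0 t x :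
  eta_du0 t = - 2 / 5 * Derive tau0 t
  /\ eta t x 0 = - (tau0 t * Derive B t + 2 / 5 * Derive tau0 t * B t).
Proof.
  determining_at_corners drop4 t x
    (fun a c : R => [a; 0; 0; c]) (fun a c : R => [-(B t * c + a * c + Q t * a)]).
  rewrite ?tau_eq_tau0, ?xi_dx, ?tau_dt, ?eta_du, (eta_affine_u t x 1) in *.
  split; lra.
Qed.

Definition xi0 t := xi t 0 0.
Definition eta0 t := eta t 0 0.

Lemma eta_affine t x u : eta t x u = eta0 t - 2 / 5 * Derive tau0 t * u.
Proof.
  rewrite eta_affine_u. destruct (eta_du0_eta_x0 t x) as [-> ->].
  unfold eta0. rewrite (proj2 (eta_du0_eta_x0 t 0)). field.
Qed.

Lemma eta_dx_eq0 nx nu t x u : (1 <= nx /\ nu = 0)%nat -> pd3 (dx_du nx nu) eta t x u = 0.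
Proof.
  intros [Hn ->]. apply (pd3_dx_du_eq0_x eta 1 0); [|lia]. intros t' x' u'. simpl.
  rewrite (Derive_ext _ (fun _ => eta0 t' - 2 / 5 * Derive tau0 t' * u'))
    by (intros; apply eta_affine).
  apply Derive_const.
Qed.
#[local] Hint Resolve eta_dx_eq0 : vanishing.

Lemma tau0_smooth : smooth1 tau0.
Proof. apply (smooth1_slice_t tau Htau). Qed.

Lemma xi0_smooth : smooth1 xi0.
Proof. apply (smooth1_slice_t xi Hxi). Qed.

Lemma eta0_smooth : smooth1 eta0.
Proof. apply (smooth1_slice_t eta Heta). Qed.

Lemma eta_dt t x u :
  pd3 [Dt] eta t x u = Derive eta0 t - 2 / 5 * Derive (Derive tau0) t * u.
Proof.
  simpl. rewrite (Derive_ext _ (fun s => eta0 s - 2 / 5 * Derive tau0 s * u))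
    by (intros; apply eta_affine).
  apply is_derive_unique. apply is_derive_minus_R; [apply Derive_correct, (eta0_smooth 0%nat)|].
  apply (is_derive_ext (fun s => (- 2 / 5 * u) * Derive tau0 s * -1)); [intros; R_eq; field|].
  eapply is_derive_eq_val.
  - apply is_derive_mult_R; [apply is_derive_scal, Derive_correct, (tau0_smooth 1%nat)
                            |apply is_derive_const_R].
  - simpl. R_eq; field.
Qed.

Lemma xi_dt t x u : pd3 [Dt] xi t x u = Derive xi0 t + x * Derive (Derive tau0) t / 5.
Proof.
  simpl. rewrite (Derive_ext _ (fun s => xi0 s + (x / 5) * Derive tau0 s))
    by (intros; rewrite xi_affine; unfold xi0; field).
  apply is_derive_unique. eapply is_derive_eq_val.
  - apply is_derive_plus_R; [apply Derive_correct, (xi0_smooth 0%nat)|].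
    apply is_derive_scal, Derive_correct, (tau0_smooth 1%nat).
  - simpl. R_eq; field.
Qed.

Definition drop5 (v : atom) : bool :=
  match v with
  | Aux k => Nat.leb 2 k
  | Auxt k => Nat.leb 1 k
  | Agen 0 nx nu => Nat.leb 1 (nx + nu)
  | Agen 1 nx nu => Nat.leb 1 nu || Nat.leb 2 nx
  | Agen 2 nx nu => Nat.leb 2 nu || (Nat.eqb nu 1 && Nat.leb 1 nx) || (Nat.leb 1 nx && Nat.eqb nu 0)
  | _ => false
  end.

Lemma determining_equations t x :
  eta0 t * E t - Derive xi0 t - x * Derive (Derive tau0) t / 5 = 0 /\
  tau0 t * Derive E t + 2 / 5 * Derive tau0 t * E t = 0 /\
  eta0 t * Q t + Derive eta0 t = 0 /\
  tau0 t * Derive Q t + Derive tau0 t * Q t - 2 / 5 * Derive (Derive tau0) t = 0.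
Proof.
  determining_at_corners drop5 t x
    (fun a c : R => [a; c]) (fun a c : R => [-(E t * a * c + Q t * a)]).
  rewrite ?tau_eq_tau0, ?xi_dx, ?tau_dt, ?eta_du, ?eta_affine, ?eta_dt, ?xi_dt in *.
  rewrite (proj1 (eta_du0_eta_x0 t x)) in *.
  repeat split; lra.
Qed.

Lemma Derive2_tau0 t : Derive (Derive tau0) t = 0.
Proof.
  destruct (determining_equations t 0) as [H0 _], (determining_equations t 1) as [H1 _]. lra.
Qed.

Lemma Derive_tau0 t : Derive tau0 t = Derive tau0 0.
Proof.
  apply (is_derive_0_const (Derive tau0)). intros s.
  rewrite <- (Derive2_tau0 s). apply Derive_correct, (tau0_smooth 1%nat).
Qed.

Lemma tau0_affine t : tau0 t = Derive tau0 0 * t + tau0 0.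
Proof.
  enough (tau0 t - Derive tau0 0 * t = tau0 0 - Derive tau0 0 * 0) by lra.
  apply (is_derive_0_const (fun s => tau0 s - Derive tau0 0 * s)). intros s.
  eapply is_derive_eq_val.
  - apply is_derive_minus_R; [apply Derive_correct, (tau0_smooth 0%nat)|].
    apply is_derive_scal, is_derive_id.
  - simpl. rewrite Derive_tau0. unfold one; simpl. ring.
Qed.

Lemma lie_point_symmetry_generator :
  exists (k2 k3 : R) (delta sigma : R -> R),
    smooth1 delta /\ smooth1 sigma /\
    symmetry_generator tau xi eta k2 k3 delta sigma /\
    symmetry_conditions B E Q k2 k3 delta sigma.
Proof.
  exists (Derive tau0 0), (tau0 0), xi0, eta0.
  split; [apply xi0_smooth|]. split; [apply eta0_smooth|]. split.
  - intros t x u. rewrite tau_eq_tau0, xi_affine, eta_affine, (tau0_affine t), (Derive_tau0 t).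
    unfold xi0. split; [ring|split; field].
  - intros t.
    destruct (determining_equations t 0) as [C1 [C2 [C3 C4]]].
    destruct (eta_du0_eta_x0 t 0) as [_ C0]. fold (eta0 t) in C0.
    rewrite Derive2_tau0 in C1, C4. rewrite <- tau0_affine, <- (Derive_tau0 t).
    repeat split; lra.
Qed.

End DeterminingEquations.

(** * Sufficiency *)

Section Converse.
Variables (B E Q : R -> R) (F : R) (tau xi eta : R -> R -> R -> R).
Variables (k2 k3 : R) (delta sigma : R -> R).
Hypotheses (Hdelta : smooth1 delta) (Hsigma : smooth1 sigma).
Hypothesis Hgen : symmetry_generator tau xi eta k2 k3 delta sigma.
Variable u : R -> R -> R.
Hypothesis Hu : smooth2 u.

Lemma is_derive_pd2_t ds t x : is_derive (fun s => pd2 ds u s x) t (pt (pd2 ds u) t x).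
Proof. apply Derive_correct, (Hu ds t x). Qed.

Lemma is_derive_pxn n t x : is_derive (fun y => pxn n u t y) x (pxn (S n) u t x).
Proof.
  apply Derive_correct, (ex_derive_ext (fun y => pd2 (repeat false n) u t y));
    [intros; symmetry; apply pxn_pd2|apply (Hu _ t x)].
Qed.

Lemma is_derive_pxn_pt n t x : is_derive (fun y => pxn n (pt u) t y) x (pxn (S n) (pt u) t x).
Proof.
  apply Derive_correct, (ex_derive_ext (fun y => pd2 (repeat false n ++ [true]) u t y));
    [intros; rewrite pxn_pd2, pd2_cat; reflexivity|apply (Hu _ t x)].
Qed.

Lemma pt_px_comm t x : pt (px u) t x = px (pt u) t x.
Proof.
  apply (Schwarz u t x).
  - apply locally_2d_forall. intros a b.
    repeat split;
      [apply (Hu [] a b)|apply (Hu [] a b)|apply (Hu [false] a b)|apply (Hu [true] a b)].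
  - apply (proj2 (continuity_2d_pt_filterlim _ _ _)), (Hu [true; false] t x).
  - apply (proj2 (continuity_2d_pt_filterlim _ _ _)), (Hu [false; true] t x).
Qed.

Lemma charQ_generator t x : charQ tau xi eta u t x =
  sigma t - 2 * k2 / 5 * u t x - (k2 * t + k3) * pt u t x - (k2 / 5 * x + delta t) * px u t x.
Proof. unfold charQ. destruct (Hgen t x (u t x)) as (-> & -> & ->). reflexivity. Qed.

Lemma pxn_S_charQ n t x : pxn (S n) (charQ tau xi eta u) t x =
  - (INR (S n) + 2) * k2 / 5 * pxn (S n) u t x - (k2 * t + k3) * pxn (S n) (pt u) t x
  - (k2 / 5 * x + delta t) * pxn (S (S n)) u t x.
Proof.
  induction n as [|n IH] in x |- *.
  - change (pxn 1 (charQ tau xi eta u) t x) with (Derive (fun y => charQ tau xi eta u t y) x).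
    rewrite (Derive_ext _ _ _ (fun y => charQ_generator t y)).
    apply is_derive_unique. eapply is_derive_eq_val.
    + apply is_derive_minus_R; [apply is_derive_minus_R; [apply is_derive_minus_R|]|].
      * apply is_derive_const_R.
      * apply is_derive_scal, (is_derive_pxn 0).
      * apply is_derive_scal, (is_derive_pxn_pt 0).
      * apply is_derive_mult_R; [auto_derive; auto|apply (is_derive_pxn 1)].
    + simpl. R_eq. field.
  - change (pxn (S (S n)) (charQ tau xi eta u) t x) with
      (Derive (fun y => pxn (S n) (charQ tau xi eta u) t y) x).
    rewrite (Derive_ext _ _ _ IH).
    apply is_derive_unique. eapply is_derive_eq_val.
    + apply is_derive_minus_R; [apply is_derive_minus_R|].
      * apply is_derive_scal, (is_derive_pxn (S n)).
      * apply is_derive_scal, (is_derive_pxn_pt (S n)).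
      * apply is_derive_mult_R; [auto_derive; auto|apply (is_derive_pxn (S (S n)))].
    + rewrite !S_INR. R_eq. field.
Qed.

Lemma phi_xn_generator n t x :
  phi_xn tau xi eta u (S n) t x = - (INR (S n) + 2) * k2 / 5 * pxn (S n) u t x.
Proof.
  unfold phi_xn. rewrite pxn_S_charQ. destruct (Hgen t x (u t x)) as (-> & -> & _). ring.
Qed.

Lemma phi_t_generator t x :
  phi_t tau xi eta u t x = Derive sigma t - 7 * k2 / 5 * pt u t x - Derive delta t * px u t x.
Proof.
  unfold phi_t, pt at 1.
  rewrite (Derive_ext _ _ _ (fun s => charQ_generator s x)).
  erewrite is_derive_unique.
  2:{ apply is_derive_minus_R; [apply is_derive_minus_R; [apply is_derive_minus_R|]|].
      - apply Derive_correct, (Hsigma 0%nat).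
      - apply is_derive_scal, (is_derive_pd2_t []).
      - apply is_derive_mult_R; [auto_derive; auto|apply (is_derive_pd2_t [true])].
      - apply is_derive_mult_R; [|apply (is_derive_pd2_t [false])].
        apply is_derive_plus_R; [apply is_derive_const_R|apply Derive_correct, (Hdelta 0%nat)]. }
  destruct (Hgen t x (u t x)) as (-> & -> & _).
  simpl pd2. rewrite pt_px_comm. R_eq. field.
Qed.

End Converse.

Lemma symmetry_generator_lie_point_symmetry (B E Q : R -> R) (F : R)
  (tau xi eta : R -> R -> R -> R) k2 k3 delta sigma :
  smooth1 delta -> smooth1 sigma ->
  symmetry_generator tau xi eta k2 k3 delta sigma ->
  symmetry_conditions B E Q k2 k3 delta sigma ->
  is_lie_point_symmetry B E Q F tau xi eta.
Proof.
  intros Hdelta Hsigma Hgen Hcond u Hu t x HDelta.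
  destruct (Hcond t) as (C1 & C2 & C3 & C4 & C5).
  unfold prDelta. cbv zeta.
  rewrite !(phi_xn_generator _ _ _ _ _ _ _ Hgen u Hu 4),
    !(phi_xn_generator _ _ _ _ _ _ _ Hgen u Hu 2), !(phi_xn_generator _ _ _ _ _ _ _ Hgen u Hu 0),
    !(phi_xn_generator _ _ _ _ _ _ _ Hgen u Hu 1),
    (phi_t_generator _ _ _ _ _ _ _ Hdelta Hsigma Hgen u Hu).
  destruct (Hgen t x (u t x)) as (-> & _ & ->).
  unfold Delta in HDelta. change (pxn 1 u t x) with (px u t x). simpl INR.
  lazymatch goal with |- ?P = 0 =>
  lazymatch type of HDelta with ?D = 0 =>
  lazymatch type of C1 with ?c1 = 0 => lazymatch type of C2 with ?c2 = 0 =>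
  lazymatch type of C3 with ?c3 = 0 => lazymatch type of C4 with ?c4 = 0 =>
  lazymatch type of C5 with ?c5 = 0 =>
    assert (Hid : P = -7 * k2 / 5 * D + pxn 3 u t x * c1 / 5 + u t x * px u t x * c2
                      + px u t x * c3 + c4 + u t x * c5) by field;
    rewrite Hid, HDelta, C1, C2, C3, C4, C5; field
  end end end end end end end.
Qed.

Theorem mainTheorem5 :
  forall (B E Q : R -> R) (F : R),
    F <> 0 -> smooth1 B -> smooth1 E -> smooth1 Q ->
  forall tau xi eta : R -> R -> R -> R,
    smooth3 tau -> smooth3 xi -> smooth3 eta ->
    (is_lie_point_symmetry B E Q F tau xi eta <->
     exists (k2 k3 : R) (delta sigma : R -> R),
       smooth1 delta /\ smooth1 sigma /\
       (forall t x u,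
          tau t x u = k2 * t + k3 /\
          xi t x u = k2 / 5 * x + delta t /\
          eta t x u = sigma t - 2 * k2 / 5 * u) /\
       (forall t,
          5 * (k2 * t + k3) * Derive B t + 2 * k2 * B t + 5 * sigma t = 0 /\
          (k2 * t + k3) * Derive E t + 2 * k2 / 5 * E t = 0 /\
          sigma t * E t - Derive delta t = 0 /\
          sigma t * Q t + Derive sigma t = 0 /\
          (k2 * t + k3) * Derive Q t + k2 * Q t = 0)).
Proof.
  intros B E Q F _ _ _ _ tau xi eta Htau Hxi Heta. split.
  - intros Hsym. exact (lie_point_symmetry_generator B E Q F tau xi eta Htau Hxi Heta Hsym).
  - intros (k2 & k3 & delta & sigma & Hdelta & Hsigma & Hgen & Hcond).
    exact (symmetry_generator_lie_point_symmetry B E Q F tau xi eta k2 k3 delta sigma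
             Hdelta Hsigma Hgen Hcond).
Qed.
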